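(* Let $a,b$ be positive integers (neither assumed prime or square-free). Let $f$ be a reduced form of discriminant $-4a^2b$ whose class in $C(-4a^2b)$ is derived from the class of $e_{-4b}=(1,0,b)$ in $C(-4b)$, and suppose $f$ is not equivalent to $(1,0,a^2b)$. Among the positive divisors $a_2$ of $a$ such that the class of $f$ is derived from the class of $(1,0,(a/a_2)^2b)$ in $C(-4(a/a_2)^2b)$, choose one for which $b_2=(a/a_2)^2b$ is maximal. If $b_2>a_2^2$, then \[ f=(a_2^2,\;2a_2k,\;k^2+b_2) \] for some integer $k$ with $-a_2/2\le k\le a_2/2$.
   Context: A binary quadratic form $(a,b,c)$ means $ax^2+bxy+cy^2$ with integer coefficients and discriminant $b^2-4ac$; primitive means $\gcd(a,b,c)=1$. Two forms are equivalent if one is obtained from the other by an integer substitution of determinant $1$. A form $(a,b,c)$ of negative discriminant is reduced if $|b|\le a\le c$, and $b\ge0$ whenever $|b|=a$ or $a=c$; every positive definite form is equivalent to a unique reduced form. For $\Delta<0$, $C(\Delta)$ is the class group of equivalence classes of primitive positive definite forms of discriminant $\Delta$ under composition. For a positive integer $s$, a class $f\in C(\Delta s^2)$ is derived from a class $g\in C(\Delta)$ if there exist a representative $g_0$ of $g$ and an integer matrix $\begin{pmatrix}\alpha&\beta\\ \gamma&\delta\end{pmatrix}$ of determinant $s$ such that the form $g_0(\alpha x+\beta y,\gamma x+\delta y)$ lies in the class $f$. *)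

From mathcomp Require Import all_boot all_order all_algebra.
Set Implicit Arguments. Unset Strict Implicit. Unset Printing Implicit Defensive.
Import Order.TTheory GRing.Theory Num.Theory.
Local Open Scope ring_scope.

(* A binary quadratic bqf (a,b,c) = a x^2 + b x y + c y^2 with integer coefficients. *)
Definition bqf := (int * int * int)%type.

Definition fa (f : bqf) : int := f.1.1.
Definition fb (f : bqf) : int := f.1.2.
Definition fc (f : bqf) : int := f.2.

Definition mkform (a b c : int) : bqf := (a, b, c).

Definition disc (f : bqf) : int := fb f ^+ 2 - 4 * fa f * fc f.

Definition primitive (f : bqf) : Prop :=
  gcdz (gcdz (fa f) (fb f)) (fc f) = 1.

Definition pos_def (f : bqf) : Prop := disc f < 0 /\ 0 < fa f.

(* The bqf g(al x + be y, ga x + de y). *)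
Definition subst (g : bqf) (al be ga de : int) : bqf :=
  mkform (fa g * al ^+ 2 + fb g * al * ga + fc g * ga ^+ 2)
         (2 * fa g * al * be + fb g * (al * de + be * ga) + 2 * fc g * ga * de)
         (fa g * be ^+ 2 + fb g * be * de + fc g * de ^+ 2).

Definition equiv (g f : bqf) : Prop :=
  exists al be ga de : int, al * de - be * ga = 1 /\ subst g al be ga de = f.

Definition reduced (f : bqf) : Prop :=
  [/\ `|fb f| <= fa f, fa f <= fc f &
      ((`|fb f| = fa f \/ fa f = fc f) -> 0 <= fb f)].

Definition derived (f g : bqf) (s : int) : Prop :=
  exists g0 : bqf, equiv g g0 /\
    exists al be ga de : int, al * de - be * ga = s /\ equiv (subst g0 al be ga de) f.

From mathcomp Require Import all_boot all_order all_algebra.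
From mathcomp Require Import ring lra zify.

Set Implicit Arguments.
Unset Strict Implicit.
Unset Printing Implicit Defensive.
Import Order.TTheory GRing.Theory Num.Theory.
Local Open Scope ring_scope.

(* Unfolding the derivation, f is, up to a unimodular change of variables, the
   form (1,0,b2)(al x + be y, ga x + de y) with al de - be ga = a2, where
   b2 = (a/a2)^2 b.  The argument has three steps.
   1. Maximality of b2 forces gcd(ga, de) = 1: if t = gcd(ga, de) > 1, the
      factor t can be pulled into the form, exhibiting f as derived from
      (1,0,t^2 b2) through a matrix of determinant a2/t.
   2. The leading coefficient of f is a2^2.  It is at most a2^2 because f
      represents (1,0,b2)(a2, 0) = a2^2 at a nonzero vector and the leading
      coefficient of a reduced form is its minimum on nonzero vectors.  It is at
      least a2^2 because f(1,0) = U^2 + b2 W^2 for some (U, W) in the image of a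
      nonzero vector; if W <> 0 this exceeds b2 > a2^2, and if W = 0 the
      coprimality of (ga, de) makes U a nonzero multiple of a2.
   3. A reduced form with leading coefficient a2^2 and discriminant
      -4 a2^2 b2 is (a2^2, 2 a2 k, k^2 + b2) with |2k| <= a2. *)

Definition ev (g : bqf) (x y : int) : int :=
  fa g * x ^+ 2 + fb g * x * y + fc g * y ^+ 2.

Lemma ev_subst (g : bqf) (al be ga de x y : int) :
  ev (subst g al be ga de) x y = ev g (al * x + be * y) (ga * x + de * y).
Proof. by case: g => [[A B] C]; rewrite /ev /subst /mkform /fa /fb /fc /=; ring. Qed.

Lemma fa_subst (g : bqf) (al be ga de : int) :
  fa (subst g al be ga de) = ev g al ga.
Proof. by case: g => [[A B] C]; rewrite /ev /subst /mkform /fa /fb /fc /=; ring. Qed.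

Lemma subst_comp (g : bqf) (a1 b1 c1 d1 a2 b2 c2 d2 : int) :
  subst (subst g a1 b1 c1 d1) a2 b2 c2 d2 =
  subst g (a1 * a2 + b1 * c2) (a1 * b2 + b1 * d2) (c1 * a2 + d1 * c2) (c1 * b2 + d1 * d2).
Proof.
by case: g => [[A B] C]; rewrite /subst /mkform /fa /fb /fc /=; congr (_, _, _); ring.
Qed.

Lemma subst_id (g : bqf) : subst g 1 0 0 1 = g.
Proof.
by case: g => [[A B] C]; rewrite /subst /mkform /fa /fb /fc /=; congr (_, _, _); ring.
Qed.

Lemma subst_scale_row (A B C al be ga de t : int) :
  subst (mkform A B C) al be (t * ga) (t * de) =
  subst (mkform A (t * B) (t ^+ 2 * C)) al be ga de.
Proof. by rewrite /subst /mkform /fa /fb /fc /=; congr (_, _, _); ring. Qed.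

Lemma PoszX (n k : nat) : (n ^ k)%:Z = n%:Z ^+ k.
Proof. by rewrite -natz natrX natz. Qed.

Lemma sqr_ge1 (K : int) : K != 0 -> 1 <= K ^+ 2.
Proof.
move=> nK; have K1 : 1 <= `|K| by rewrite -gtz0_ge1 normr_gt0.
by rewrite -real_normK ?num_real //; nra.
Qed.

Lemma norm_form_ge1 (x y : int) :
  (x != 0) || (y != 0) -> 1 <= `|x| ^+ 2 - `|x| * `|y| + `|y| ^+ 2.
Proof.
move=> nz; have hx := normr_ge0 x; have hy := normr_ge0 y.
have -> : `|x| ^+ 2 - `|x| * `|y| + `|y| ^+ 2 = (`|x| - `|y|) ^+ 2 + `|x| * `|y|.
  by ring.
case: (eqVneq (`|x| - `|y|) 0) => [/eqP|nd]; last by have := sqr_ge1 nd; nra.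
rewrite subr_eq0 => /eqP exy; rewrite exy subrr expr0n /= add0r.
have y1 : 1 <= `|y| by rewrite -gtz0_ge1; case/orP: nz; rewrite -normr_gt0 // exy.
nra.
Qed.

Lemma reduced_fa_min (f : bqf) (x y : int) :
  reduced f -> (x != 0) || (y != 0) -> fa f <= ev f x y.
Proof.
case: f => [[A B] C]; rewrite /reduced /ev /fa /fb /fc /= => -[leBA leAC _] nz.
have hN : 0 <= A * (`|x| ^+ 2 - `|x| * `|y| + `|y| ^+ 2 - 1).
  by rewrite mulr_ge0 ?subr_ge0 ?norm_form_ge1 // (le_trans _ leBA).
have hxy : - (`|B| * (`|x| * `|y|)) <= B * x * y.
  rewrite -normrM -mulrA -normrM lerNl.
  by apply: le_trans (ler_norm _) _; rewrite normrN.
have hxy0 : 0 <= `|x| * `|y| by rewrite mulr_ge0.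
have hAB : 0 <= (A - `|B|) * (`|x| * `|y|) by rewrite mulr_ge0 // subr_ge0.
have hCA : 0 <= (C - A) * `|y| ^+ 2 by rewrite mulr_ge0 ?sqr_ge0 // subr_ge0.
rewrite -[x ^+ 2]real_normK ?num_real // -[y ^+ 2]real_normK ?num_real //.
nra.
Qed.

Lemma equiv_represents (g f : bqf) (p q : int) :
  equiv g f -> (p != 0) || (q != 0) ->
  exists x y : int, ((x != 0) || (y != 0)) /\ ev f x y = ev g p q.
Proof.
move=> [u1 [u2 [u3 [u4 [dU <-]]]]] nz.
have ex : u1 * (u4 * p - u2 * q) + u2 * (u1 * q - u3 * p) = p.
  by rewrite -[RHS]mul1r -dU; ring.
have ey : u3 * (u4 * p - u2 * q) + u4 * (u1 * q - u3 * p) = q.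
  by rewrite -[RHS]mul1r -dU; ring.
exists (u4 * p - u2 * q), (u1 * q - u3 * p); rewrite ev_subst ex ey; split=> //.
apply: contraTT nz; rewrite negb_or !negbK => /andP[/eqP x0 /eqP y0].
by move: ex ey; rewrite x0 y0 !mulr0 addr0 => <- <-; rewrite eqxx.
Qed.

(* Upper bound: a reduced form equivalent to g(M) has leading coefficient at
   most fa g * (det M)^2, the value of g(M) at the adjugate column (de, -ga). *)
Lemma reduced_fa_le_det (f g : bqf) (al be ga de : int) :
  reduced f -> equiv (subst g al be ga de) f -> al * de - be * ga != 0 ->
  fa f <= fa g * (al * de - be * ga) ^+ 2.
Proof.
move=> red eqf nzdet.
have nz : (de != 0) || (- ga != 0).
  apply: contraTT nzdet; rewrite negb_or !negbK oppr_eq0 => /andP[/eqP -> /eqP ->].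
  by rewrite !mulr0 subr0.
have [x [y [nxy val]]] := equiv_represents eqf nz.
have := reduced_fa_min red nxy; rewrite val ev_subst.
have -> : al * de + be * - ga = al * de - be * ga by ring.
have -> : ga * de + de * - ga = 0 by ring.
by rewrite /ev expr0n /= !mulr0 !addr0.
Qed.

Lemma coprime_row_kernel (al be ga de s x y : int) :
  al * de - be * ga = s -> s != 0 -> gcdz ga de = 1 ->
  (x != 0) || (y != 0) -> ga * x + de * y = 0 ->
  exists K : int, K != 0 /\ al * x + be * y = s * K.
Proof.
move=> dM ns g1 nxy W0; set U := al * x + be * y.
have hx : s * x = de * U.
  by rewrite -dM /U -[RHS]subr0 -(mulr0 be) -W0; ring.
have hy : s * y = - (ga * U).
  by rewrite -dM /U -[RHS]add0r -(mulr0 al) -W0; ring.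
have [u [v uv]] := Bezoutz ga de; rewrite g1 in uv.
have hU : U = s * (v * x - u * y).
  have -> : s * (v * x - u * y) = v * (s * x) - u * (s * y) by ring.
  by rewrite hx hy -[LHS]mulr1 -uv; ring.
exists (v * x - u * y); split=> //.
apply: contraTT nxy => /negPn/eqP K0.
move: hx hy; rewrite hU K0 !mulr0 oppr0 => /eqP + /eqP.
by rewrite !mulf_eq0 (negbTE ns) /= => /eqP -> /eqP ->; rewrite eqxx.
Qed.

Lemma diag_fa_ge (f : bqf) (c al be ga de s : int) :
  equiv (subst (mkform 1 0 c) al be ga de) f ->
  al * de - be * ga = s -> 0 < s -> s ^+ 2 < c -> gcdz ga de = 1 ->
  s ^+ 2 <= fa f.
Proof.
move=> [u1 [u2 [u3 [u4 [dU <-]]]]] dM sp ltc g1.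
have nz : (u1 != 0) || (u3 != 0).
  apply: contraTT isT; rewrite negb_or !negbK => /andP[/eqP u10 /eqP u30].
  by move: dU; rewrite u10 u30 mul0r mulr0 subr0 => /eqP; rewrite eq_sym oner_eq0.
rewrite fa_subst ev_subst /ev /fa /fb /fc /= mul1r !mul0r addr0.
set U := al * u1 + be * u3; set W := ga * u1 + de * u3.
have hU := sqr_ge0 U.
case: (eqVneq W 0) => [W0|nW]; last by have := sqr_ge1 nW; nra.
have [K [nK]] := coprime_row_kernel dM (lt0r_neq0 sp) g1 nz W0.
rewrite -/U => ->; rewrite W0 expr0n /= mulr0 addr0 exprMn.
by have := sqr_ge1 nK; have := sqr_ge0 s; nra.
Qed.

(* A reduced form of discriminant -4 s^2 c whose leading coefficient is s^2
   has the shape (s^2, 2 s k, k^2 + c) with |2k| <= s: the discriminant forces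
   (2s)^2 to divide the middle coefficient squared. *)
Lemma reduced_shape (f : bqf) (s c : int) :
  reduced f -> 0 < s -> disc f = - 4 * (s ^+ 2 * c) -> fa f = s ^+ 2 ->
  exists k : int, - s <= 2 * k /\ 2 * k <= s /\
    f = mkform (s ^+ 2) (2 * s * k) (k ^+ 2 + c).
Proof.
case: f => [[A B] C]; rewrite /reduced /disc /fa /fb /fc /= => -[leBA _ _] sp dsc eA.
subst A.
have B2 : B ^+ 2 = (2 * s) ^+ 2 * (C - c).
  have -> : B ^+ 2 = (B ^+ 2 - 4 * s ^+ 2 * C) + 4 * s ^+ 2 * C by ring.
  by rewrite dsc; ring.
have dvdB : (2 * s %| B)%Z.
  have : ((2 * s) ^+ 2 %| B ^+ 2)%Z by rewrite B2 dvdz_mulr.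
  by rewrite !dvdzE !abszX dvdn_pexp2r.
set k := (B %/ (2 * s))%Z.
have eB : B = 2 * s * k by rewrite mulrC /k divzK.
have eC : C = k ^+ 2 + c.
  have s2 : (2 * s) ^+ 2 != 0 by rewrite expf_neq0 // mulf_neq0 // lt0r_neq0.
  have : (2 * s) ^+ 2 * k ^+ 2 = (2 * s) ^+ 2 * (C - c) by rewrite -B2 eB; ring.
  by move/(mulfI s2) => ->; ring.
move: leBA; rewrite eB ler_norml => /andP[lo hi].
by exists k; split; [nra | split; [nra | rewrite eC]].
Qed.

Lemma derivedP (f g : bqf) (s : int) :
  derived f g s <->
  exists al be ga de : int, al * de - be * ga = s /\ equiv (subst g al be ga de) f.
Proof.
split.
  move=> [_ [[v1 [v2 [v3 [v4 [dV <-]]]]] [m1 [m2 [m3 [m4 [dM eqf]]]]]]].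
  rewrite subst_comp in eqf; do 4 eexists; split; last exact: eqf.
  by rewrite -dM -[RHS]mul1r -dV; ring.
move=> [al [be [ga [de [dM eqf]]]]]; exists g; split; last by exists al, be, ga, de.
by exists 1, 0, 0, 1; rewrite subst_id; split.
Qed.

Lemma derived_pull_factor (f : bqf) (c t al be ga de : int) :
  equiv (subst (mkform 1 0 c) al be (t * ga) (t * de)) f ->
  derived f (mkform 1 0 (t ^+ 2 * c)) (al * de - be * ga).
Proof.
move=> eqf; apply/derivedP; exists al, be, ga, de; split=> //.
by move: eqf; rewrite subst_scale_row mulr0.
Qed.

Lemma maximal_derivation_coprime (a b a2 : nat) (f : bqf) (al be ga de : int) :
  (0 < a)%N -> (0 < b)%N -> (0 < a2)%N -> (a2 %| a)%N ->
  (forall a2' : nat, (0 < a2')%N -> (a2' %| a)%N ->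
     derived f (mkform 1 0 ((a %/ a2') ^ 2 * b)%:Z) a2'%:Z ->
     ((a %/ a2') ^ 2 * b <= (a %/ a2) ^ 2 * b)%N) ->
  al * de - be * ga = a2%:Z ->
  equiv (subst (mkform 1 0 ((a %/ a2) ^ 2 * b)%:Z) al be ga de) f ->
  gcdz ga de = 1.
Proof.
move=> a0 b0 a20 a2a maxi dM eqf.
have ac : a = (a2 * (a %/ a2))%N by rewrite mulnC divnK.
set c := (a %/ a2)%N in ac maxi eqf *.
have c0 : (0 < c)%N by move: a0; rewrite ac muln_gt0 => /andP[].
set t := gcdn `|ga| `|de|.
have [g' eg] : exists g', ga = g' * t%:Z by apply/dvdzP/dvdz_gcdl.
have [d' ed] : exists d', de = d' * t%:Z by apply/dvdzP/dvdz_gcdr.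
rewrite eg ed !(mulrC _ t%:Z) in dM eqf.
have a2E : a2%:Z = (al * d' - be * g') * t%:Z by rewrite -dM; ring.
have t0 : (0 < t)%N.
  by rewrite lt0n; apply: contraTneq a20 => t0; rewrite -ltz_nat a2E t0 mulr0.
have q0 : 0 < al * d' - be * g'.
  by rewrite -(pmulr_lgt0 _ (_ : 0 < t%:Z)) ?ltz_nat // -a2E ltz_nat.
set qn := absz (al * d' - be * g')%R.
have qE : al * d' - be * g' = qn%:Z by rewrite /qn gez0_abs ?ltW.
have a2n : a2 = (qn * t)%N by apply/eqP; rewrite -eqz_nat PoszM -qE -a2E.
have qn0 : (0 < qn)%N by move: a20; rewrite a2n muln_gt0 => /andP[].
have aq : (a %/ qn = t * c)%N by rewrite ac a2n -mulnA mulKn.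
have der : derived f (mkform 1 0 ((a %/ qn) ^ 2 * b)%:Z) qn%:Z.
  rewrite -qE aq expnMn -mulnA PoszM PoszX.
  exact: derived_pull_factor.
have qa : (qn %| a)%N by rewrite ac a2n -mulnA dvdn_mulr.
have := maxi qn qn0 qa der; rewrite aq expnMn -mulnA.
rewrite -{2}[(c ^ 2 * b)%N]mul1n leq_pmul2r ?muln_gt0 ?expn_gt0 ?c0 ?b0 // => t2.
by rewrite /gcdz -/t; congr Posz; nia.
Qed.

Theorem propositionA2 (a b : nat) (f : bqf) (a2 : nat) :
  (0 < a)%N -> (0 < b)%N ->
  primitive f -> reduced f -> disc f = - 4 * (a ^ 2 * b)%:Z ->
  derived f (mkform 1 0 b%:Z) a%:Z ->
  ~ equiv f (mkform 1 0 (a ^ 2 * b)%:Z) ->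
  (0 < a2)%N -> (a2 %| a)%N ->
  derived f (mkform 1 0 ((a %/ a2) ^ 2 * b)%:Z) a2%:Z ->
  (forall a2' : nat, (0 < a2')%N -> (a2' %| a)%N ->
     derived f (mkform 1 0 ((a %/ a2') ^ 2 * b)%:Z) a2'%:Z ->
     ((a %/ a2') ^ 2 * b <= (a %/ a2) ^ 2 * b)%N) ->
  (a2 ^ 2 < (a %/ a2) ^ 2 * b)%N ->
  exists k : int,
    - a2%:Z <= 2 * k /\ 2 * k <= a2%:Z /\
    f = mkform (a2 ^ 2)%:Z (2 * a2%:Z * k) (k ^+ 2 + ((a %/ a2) ^ 2 * b)%:Z).
Proof.
move=> a0 b0 _ red dsc _ _ a20 a2a der maxi lt.
have /derivedP [al [be [ga [de [dM eqf]]]]] := der.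
have coprime := maximal_derivation_coprime a0 b0 a20 a2a maxi dM eqf.
have a2p : 0 < a2%:Z by rewrite ltz_nat.
have le_fa : fa f <= a2%:Z ^+ 2.
  by have := reduced_fa_le_det red eqf; rewrite dM mul1r; apply; rewrite lt0r_neq0.
have ge_fa : a2%:Z ^+ 2 <= fa f.
  by apply: diag_fa_ge eqf dM a2p _ coprime; rewrite -PoszX ltz_nat.
rewrite PoszX; apply: reduced_shape red a2p _ _; last exact/le_anti/andP.
rewrite dsc -PoszX -PoszM; congr (_ * Posz _).
by rewrite mulnA -expnMn [(a2 * _)%N]mulnC divnK.
Qed.
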